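(* Let $\boldsymbol{x}_p=[i_p,v_p]^{\intercal}$ be the unique $T$-periodic solution of the switched system, i.e. the solution with initial value $$\boldsymbol{x}_p(0)=\left(I-\mathrm{e}^{\frac{T}{2}A_2}\mathrm{e}^{\frac{T}{2}A_1}\right)^{-1}\mathrm{e}^{\frac{T}{2}A_2}A_1^{-1}\left(\mathrm{e}^{\frac{T}{2}A_1}-I\right)\boldsymbol{b}_1 .$$ Then $i_p(0)=i_p(T/2)=i_p(T)$.
   Context: Let $R,L,C,V_{dc},T>0$. Let $\boldsymbol{x}(t)=[i(t),v(t)]^{\intercal}$. Define $$A_1=\begin{bmatrix}-\frac RL & -\frac1L\\ \frac1C & 0\end{bmatrix},\quad A_2=\begin{bmatrix}-\frac RL & \frac1L\\ -\frac1C & 0\end{bmatrix},\quad \boldsymbol{b}_1=\begin{bmatrix}\frac{V_{dc}}L\\ 0\end{bmatrix}.$$ The switched system on $t\ge0$ is: $\boldsymbol{x}'=A_1\boldsymbol{x}+\boldsymbol{b}_1$ on each interval $[(k-1)T,(k-1)T+\frac T2]$ and $\boldsymbol{x}'=A_2\boldsymbol{x}$ on each interval $[(k-1)T+\frac T2,kT]$, $k=1,2,\dots$; solutions are continuous. The matrix $I-\mathrm{e}^{\frac T2A_2}\mathrm{e}^{\frac T2A_1}$ is invertible and the solution with the stated initial value is $T$-periodic. *)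

From Stdlib Require Import Reals Lra Factorial.
Open Scope R_scope.

Record mat2 := M2 { m11 : R; m12 : R; m21 : R; m22 : R }.
Record vec2 := V2 { vi : R; vv : R }.

Definition mid : mat2 := M2 1 0 0 1.
Definition madd (A B : mat2) : mat2 :=
  M2 (m11 A + m11 B) (m12 A + m12 B) (m21 A + m21 B) (m22 A + m22 B).
Definition msub (A B : mat2) : mat2 :=
  M2 (m11 A - m11 B) (m12 A - m12 B) (m21 A - m21 B) (m22 A - m22 B).
Definition mscale (a : R) (A : mat2) : mat2 :=
  M2 (a * m11 A) (a * m12 A) (a * m21 A) (a * m22 A).
Definition mmul (A B : mat2) : mat2 :=
  M2 (m11 A * m11 B + m12 A * m21 B) (m11 A * m12 B + m12 A * m22 B)
     (m21 A * m11 B + m22 A * m21 B) (m21 A * m12 B + m22 A * m22 B).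
Fixpoint mpow (A : mat2) (n : nat) : mat2 :=
  match n with O => mid | S k => mmul A (mpow A k) end.
Definition mdet (A : mat2) : R := m11 A * m22 A - m12 A * m21 A.
(* inverse of a 2x2 matrix (adjugate / determinant); meaningful when mdet A <> 0 *)
Definition minv (A : mat2) : mat2 :=
  mscale (/ mdet A) (M2 (m22 A) (- m12 A) (- m21 A) (m11 A)).
Definition mvmul (A : mat2) (x : vec2) : vec2 :=
  V2 (m11 A * vi x + m12 A * vv x) (m21 A * vi x + m22 A * vv x).
Definition vadd (x y : vec2) : vec2 := V2 (vi x + vi y) (vv x + vv y).

Fixpoint exp_partial (A : mat2) (t : R) (n : nat) : mat2 :=
  match n with
  | O => mid
  | S k => madd (exp_partial A t k) (mscale (t ^ (S k) / INR (fact (S k))) (mpow A (S k)))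
  end.

Definition is_mexp (A : mat2) (t : R) (E : mat2) : Prop :=
  Un_cv (fun n => m11 (exp_partial A t n)) (m11 E) /\
  Un_cv (fun n => m12 (exp_partial A t n)) (m12 E) /\
  Un_cv (fun n => m21 (exp_partial A t n)) (m21 E) /\
  Un_cv (fun n => m22 (exp_partial A t n)) (m22 E).

Definition Am1 (Rr L C : R) : mat2 := M2 (- (Rr / L)) (- (1 / L)) (1 / C) 0.
Definition Am2 (Rr L C : R) : mat2 := M2 (- (Rr / L)) (1 / L) (- (1 / C)) 0.
Definition bv1 (L Vdc : R) : vec2 := V2 (Vdc / L) 0.

(* the stated initial value
   (I - E2 E1)^{-1} E2 A1^{-1} (E1 - I) b1,  with E1 = e^{T/2 A1}, E2 = e^{T/2 A2} *)
Definition xp0 (Rr L C Vdc : R) (E1 E2 : mat2) : vec2 :=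
  mvmul (minv (msub mid (mmul E2 E1)))
    (mvmul E2 (mvmul (minv (Am1 Rr L C)) (mvmul (msub E1 mid) (bv1 L Vdc)))).

From Stdlib Require Import Reals Lra Lia Factorial.
From Coquelicot Require Import Coquelicot.
Open Scope R_scope.

(* On each half period the state, shifted by the equilibrium [c = (0, Vdc)] of the first
   subsystem, solves a linear ODE [z' = A z], so it is transported by the matrix exponential.
   This is proved by comparing with the partial sums [P_m] of the exponential series: the
   derivative of [s |-> P_m(b - s) z(s)] is the first neglected term of the series, so by the
   mean value theorem [z(b) - P_m(b - a) z(a)] tends to 0.
   Since [A2 = S A1 S] with [S = diag(1, -1)], also [E2 = S E1 S].  The stated initial value
   is the fixed point of the period map, and invertibility of
   [I - S E1 S E1 = (I - S E1)(I + S E1)] forces the half-wave symmetry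
   [x(T/2) = (i(0), Vdc - v(0))]; thus [i(T/2) = i(0)], and [i(T) = i(0)] is periodicity. *)

(** * Matrix algebra *)

Definition vsub (x y : vec2) : vec2 := V2 (vi x - vi y) (vv x - vv y).
Definition mzero : mat2 := M2 0 0 0 0.

(* [mflip X] is the conjugate of [X] by [diag(1, -1)]. *)
Definition mflip (X : mat2) : mat2 := M2 (m11 X) (- m12 X) (- m21 X) (m22 X).
Definition vflip (x : vec2) : vec2 := V2 (vi x) (- vv x).

Lemma vec2_ext x y : vi x = vi y -> vv x = vv y -> x = y.
Proof. destruct x, y; cbn; now intros -> ->. Qed.

Ltac mat2_ring :=
  repeat match goal with
         | X : mat2 |- _ => destruct X
         | x : vec2 |- _ => destruct x
         end;
  cbv [mid mzero madd msub mscale mmul mvmul vadd vsub mflip vflip]; cbn;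
  f_equal; ring.

Lemma mmul_assoc X Y Z : mmul X (mmul Y Z) = mmul (mmul X Y) Z.
Proof. mat2_ring. Qed.
Lemma mmul_mid_l X : mmul mid X = X.
Proof. mat2_ring. Qed.
Lemma mmul_mid_r X : mmul X mid = X.
Proof. mat2_ring. Qed.
Lemma mmul_madd_l X Y Z : mmul (madd X Y) Z = madd (mmul X Z) (mmul Y Z).
Proof. mat2_ring. Qed.
Lemma mmul_madd_r X Y Z : mmul X (madd Y Z) = madd (mmul X Y) (mmul X Z).
Proof. mat2_ring. Qed.
Lemma mmul_mscale_l a X Y : mmul (mscale a X) Y = mscale a (mmul X Y).
Proof. mat2_ring. Qed.
Lemma mmul_mscale_r a X Y : mmul X (mscale a Y) = mscale a (mmul X Y).
Proof. mat2_ring. Qed.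
Lemma mflip_mmul X Y : mflip (mmul X Y) = mmul (mflip X) (mflip Y).
Proof. mat2_ring. Qed.
Lemma mvmul_mid x : mvmul mid x = x.
Proof. mat2_ring. Qed.
Lemma mdet_mmul X Y : mdet (mmul X Y) = mdet X * mdet Y.
Proof. destruct X, Y; unfold mdet, mmul; cbn; ring. Qed.

Lemma mvmul_minv_r X x : mdet X <> 0 -> mvmul X (mvmul (minv X) x) = x.
Proof.
  intros HX; destruct X, x; unfold mdet in HX; cbn in HX.
  unfold minv, mdet, mvmul, mscale; cbn; f_equal; field; exact HX.
Qed.

Lemma mvmul_minv_l X x : mdet X <> 0 -> mvmul (minv X) (mvmul X x) = x.
Proof.
  intros HX; destruct X, x; unfold mdet in HX; cbn in HX.
  unfold minv, mdet, mvmul, mscale; cbn; f_equal; field; exact HX.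
Qed.

Lemma mvmul_minv_comm A X x : mdet A <> 0 -> mmul A X = mmul X A ->
  mvmul (minv A) (mvmul X x) = mvmul X (mvmul (minv A) x).
Proof.
  intros HA HAX.
  rewrite <- (mvmul_minv_l A (mvmul X (mvmul (minv A) x))) by exact HA.
  f_equal.
  replace (mvmul A (mvmul X (mvmul (minv A) x)))
    with (mvmul (mmul A X) (mvmul (minv A) x)) by mat2_ring.
  rewrite HAX.
  replace (mvmul (mmul X A) (mvmul (minv A) x))
    with (mvmul X (mvmul A (mvmul (minv A) x))) by mat2_ring.
  now rewrite mvmul_minv_r.
Qed.

Lemma mvmul_eq0 X x : mdet X <> 0 -> mvmul X x = V2 0 0 -> x = V2 0 0.
Proof.
  intros HX Hx. rewrite <- (mvmul_minv_l X x), Hx by exact HX.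
  unfold minv, mvmul, mscale; cbn; f_equal; ring.
Qed.

(** * The exponential series *)

Definition exp_coef (k : nat) (t : R) : R := t ^ k / INR (fact k).

Lemma exp_partial_S A t n :
  exp_partial A t (S n) = madd (exp_partial A t n) (mscale (exp_coef (S n) t) (mpow A (S n))).
Proof. reflexivity. Qed.

Lemma mpow_comm A k : mmul A (mpow A k) = mmul (mpow A k) A.
Proof.
  induction k as [|k IHk]; cbn [mpow].
  - now rewrite mmul_mid_l, mmul_mid_r.
  - now rewrite IHk at 1; rewrite mmul_assoc.
Qed.

Lemma exp_partial_comm A t n : mmul A (exp_partial A t n) = mmul (exp_partial A t n) A.
Proof.
  induction n as [|n IHn].
  - cbn; now rewrite mmul_mid_l, mmul_mid_r.
  - rewrite exp_partial_S, mmul_madd_l, mmul_madd_r, IHn, mmul_mscale_l, mmul_mscale_r, mpow_comm.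
    reflexivity.
Qed.

Lemma exp_partial_t0 A n : exp_partial A 0 n = mid.
Proof.
  induction n as [|n IHn]; [reflexivity|].
  rewrite exp_partial_S, IHn.
  replace (exp_coef (S n) 0) with 0 by (unfold exp_coef, Rdiv; rewrite pow_i by lia; ring).
  generalize (mpow A (S n)); intros; mat2_ring.
Qed.

Lemma exp_partial_defect A t m :
  msub (mmul (exp_partial A t (S m)) A) (mmul A (exp_partial A t m))
  = mscale (exp_coef (S m) t) (mpow A (S (S m))).
Proof.
  rewrite <- exp_partial_comm, exp_partial_S, mmul_madd_r, mmul_mscale_r.
  change (mpow A (S (S m))) with (mmul A (mpow A (S m))).
  generalize (mmul A (exp_partial A t m)); intros; mat2_ring.
Qed.

Definition mcv (u : nat -> mat2) (E : mat2) : Prop :=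
  Un_cv (fun n => m11 (u n)) (m11 E) /\ Un_cv (fun n => m12 (u n)) (m12 E) /\
  Un_cv (fun n => m21 (u n)) (m21 E) /\ Un_cv (fun n => m22 (u n)) (m22 E).

Lemma Un_cv_const a : Un_cv (fun _ => a) a.
Proof.
  intros e He; exists 0%nat; intros n _.
  unfold Rdist; rewrite Rminus_diag, Rabs_R0; exact He.
Qed.

Lemma Un_cv_lincomb a b u w l1 l2 :
  Un_cv u l1 -> Un_cv w l2 -> Un_cv (fun n => a * u n + b * w n) (a * l1 + b * l2).
Proof. intros Hu Hw; apply CV_plus; apply CV_mult; auto using Un_cv_const. Qed.

Lemma Un_cv_lincomb_r a b u w l1 l2 :
  Un_cv u l1 -> Un_cv w l2 -> Un_cv (fun n => u n * a + w n * b) (l1 * a + l2 * b).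
Proof. intros Hu Hw; apply CV_plus; apply CV_mult; auto using Un_cv_const. Qed.

Lemma Un_cv_ext u w l : (forall n, u n = w n) -> Un_cv u l -> Un_cv w l.
Proof. intros Huw Hu e He; destruct (Hu e He) as [N HN]; exists N; intros; rewrite <- Huw; auto. Qed.

Lemma mcv_ext u w E : (forall n, u n = w n) -> mcv u E -> mcv w E.
Proof.
  intros Huw (H11 & H12 & H21 & H22); repeat split.
  - apply (Un_cv_ext (fun n => m11 (u n))); [intro n; now rewrite Huw | exact H11].
  - apply (Un_cv_ext (fun n => m12 (u n))); [intro n; now rewrite Huw | exact H12].
  - apply (Un_cv_ext (fun n => m21 (u n))); [intro n; now rewrite Huw | exact H21].
  - apply (Un_cv_ext (fun n => m22 (u n))); [intro n; now rewrite Huw | exact H22].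
Qed.

Lemma mcv_unique u E E' : mcv u E -> mcv u E' -> E = E'.
Proof.
  intros (H11 & H12 & H21 & H22) (G11 & G12 & G21 & G22); destruct E, E'; cbn in *.
  f_equal; eapply UL_sequence; eauto.
Qed.

Lemma mcv_mmul_l X u E : mcv u E -> mcv (fun n => mmul X (u n)) (mmul X E).
Proof. intros (H11 & H12 & H21 & H22); repeat split; apply Un_cv_lincomb; auto. Qed.

Lemma mcv_mmul_r X u E : mcv u E -> mcv (fun n => mmul (u n) X) (mmul E X).
Proof. intros (H11 & H12 & H21 & H22); repeat split; apply Un_cv_lincomb_r; auto. Qed.

Lemma mcv_mflip u E : mcv u E -> mcv (fun n => mflip (u n)) (mflip E).
Proof.
  intros (H11 & H12 & H21 & H22); repeat split;
    [exact H11 | exact (CV_opp _ _ H12) | exact (CV_opp _ _ H21) | exact H22].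
Qed.

Lemma mcv_mvmul u E x : mcv u E ->
  Un_cv (fun n => vi (mvmul (u n) x)) (vi (mvmul E x)) /\
  Un_cv (fun n => vv (mvmul (u n) x)) (vv (mvmul E x)).
Proof. intros (H11 & H12 & H21 & H22); split; apply Un_cv_lincomb_r; auto. Qed.

Lemma is_mexp_unique A t E E' : is_mexp A t E -> is_mexp A t E' -> E = E'.
Proof. apply mcv_unique. Qed.

Lemma is_mexp_comm A t E : is_mexp A t E -> mmul A E = mmul E A.
Proof.
  intros HE; apply (mcv_unique (fun n => mmul A (exp_partial A t n))).
  - now apply mcv_mmul_l.
  - eapply mcv_ext; [intro n; apply eq_sym, exp_partial_comm|]. now apply mcv_mmul_r.
Qed.

Lemma mflip_mpow A k : mpow (mflip A) k = mflip (mpow A k).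
Proof.
  induction k as [|k IHk]; cbn [mpow].
  - unfold mflip, mid; cbn; f_equal; ring.
  - now rewrite IHk, mflip_mmul.
Qed.

Lemma mflip_exp_partial A t n : exp_partial (mflip A) t n = mflip (exp_partial A t n).
Proof.
  induction n as [|n IHn].
  - cbn [exp_partial]; unfold mflip, mid; cbn; f_equal; ring.
  - rewrite !exp_partial_S, IHn, mflip_mpow.
    generalize (exp_partial A t n) (mpow A (S n)); intros; mat2_ring.
Qed.

Lemma is_mexp_mflip A t E : is_mexp A t E -> is_mexp (mflip A) t (mflip E).
Proof.
  intros HE; apply (mcv_ext (fun n => mflip (exp_partial A t n))).
  - intro n; now rewrite mflip_exp_partial.
  - now apply mcv_mflip.
Qed.

(** * Derivatives and bounds *)

Definition vderiv (z : R -> vec2) (t : R) (dz : vec2) : Prop :=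
  derivable_pt_lim (fun s => vi (z s)) t (vi dz) /\ derivable_pt_lim (fun s => vv (z s)) t (vv dz).

Definition mderiv (M : R -> mat2) (t : R) (dM : mat2) : Prop :=
  derivable_pt_lim (fun s => m11 (M s)) t (m11 dM) /\ derivable_pt_lim (fun s => m12 (M s)) t (m12 dM) /\
  derivable_pt_lim (fun s => m21 (M s)) t (m21 dM) /\ derivable_pt_lim (fun s => m22 (M s)) t (m22 dM).

Definition vcont (z : R -> vec2) (t : R) : Prop :=
  continuity_pt (fun s => vi (z s)) t /\ continuity_pt (fun s => vv (z s)) t.

Lemma derivable_pt_lim_exp_coef k t : derivable_pt_lim (exp_coef (S k)) t (exp_coef k t).
Proof.
  unfold exp_coef.
  apply (derivable_pt_lim_ext (mult_real_fct (/ INR (fact (S k))) (fun s => s ^ S k))).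
  { intro s; unfold mult_real_fct, Rdiv; ring. }
  replace (t ^ k / INR (fact k)) with (/ INR (fact (S k)) * (INR (S k) * t ^ Nat.pred (S k))).
  - apply derivable_pt_lim_scal, derivable_pt_lim_pow.
  - cbn [Nat.pred]; rewrite fact_simpl, mult_INR.
    field; split; [apply INR_fact_neq_0 | apply not_0_INR; lia].
Qed.

Lemma mderiv_const X t : mderiv (fun _ => X) t mzero.
Proof. repeat split; apply derivable_pt_lim_const. Qed.

Lemma mderiv_madd M N t dM dN : mderiv M t dM -> mderiv N t dN ->
  mderiv (fun s => madd (M s) (N s)) t (madd dM dN).
Proof.
  intros (H11 & H12 & H21 & H22) (G11 & G12 & G21 & G22); repeat split;
    apply derivable_pt_lim_plus; assumption.
Qed.

Lemma mderiv_mscale f df X t : derivable_pt_lim f t df ->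
  mderiv (fun s => mscale (f s) X) t (mscale df X).
Proof.
  intros Hf; repeat split; cbn;
    (eapply derivable_pt_lim_ext; [intro s; apply Rmult_comm|]);
    rewrite Rmult_comm; apply derivable_pt_lim_scal, Hf.
Qed.

Lemma mderiv_eq M t dM dM' : mderiv M t dM -> dM = dM' -> mderiv M t dM'.
Proof. now intros H <-. Qed.

Lemma mderiv_exp_partial A t n :
  mderiv (fun s => exp_partial A s (S n)) t (mmul A (exp_partial A t n)).
Proof.
  induction n as [|n IHn]; cbn [exp_partial].
  - eapply mderiv_eq.
    + apply mderiv_madd; [apply mderiv_const | apply mderiv_mscale, derivable_pt_lim_exp_coef].
    + replace (exp_coef 0 t) with 1 by (unfold exp_coef; cbn; field).
      cbn [mpow exp_partial]; mat2_ring.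
  - eapply mderiv_eq.
    + apply mderiv_madd; [exact IHn | apply mderiv_mscale, derivable_pt_lim_exp_coef].
    + cbn [exp_partial]; now rewrite mmul_madd_r, mmul_mscale_r.
Qed.

Lemma mderiv_reflect M b t dM : mderiv M (b - t) dM ->
  mderiv (fun s => M (b - s)) t (mscale (-1) dM).
Proof.
  assert (Hb : derivable_pt_lim (fun s => b - s) t (-1)).
  { replace (-1) with (0 - 1) by ring.
    apply derivable_pt_lim_minus; [apply derivable_pt_lim_const | apply derivable_pt_lim_id]. }
  intros (H11 & H12 & H21 & H22); refine (conj _ (conj _ (conj _ _))); cbn [mscale m11 m12 m21 m22];
    rewrite Rmult_comm; [ apply (derivable_pt_lim_comp _ (fun u => m11 (M u)))
    | apply (derivable_pt_lim_comp _ (fun u => m12 (M u)))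
    | apply (derivable_pt_lim_comp _ (fun u => m21 (M u)))
    | apply (derivable_pt_lim_comp _ (fun u => m22 (M u))) ]; assumption.
Qed.

Lemma derivable_pt_lim_dot f1 f2 g1 g2 df1 df2 dg1 dg2 t :
  derivable_pt_lim f1 t df1 -> derivable_pt_lim f2 t df2 ->
  derivable_pt_lim g1 t dg1 -> derivable_pt_lim g2 t dg2 ->
  derivable_pt_lim (fun s => f1 s * g1 s + f2 s * g2 s) t
    (df1 * g1 t + df2 * g2 t + (f1 t * dg1 + f2 t * dg2)).
Proof.
  intros Hf1 Hf2 Hg1 Hg2.
  replace (df1 * g1 t + df2 * g2 t + (f1 t * dg1 + f2 t * dg2))
    with ((df1 * g1 t + f1 t * dg1) + (df2 * g2 t + f2 t * dg2)) by ring.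
  apply derivable_pt_lim_plus; apply derivable_pt_lim_mult; assumption.
Qed.

Lemma vderiv_mvmul M z t dM dz : mderiv M t dM -> vderiv z t dz ->
  vderiv (fun s => mvmul (M s) (z s)) t (vadd (mvmul dM (z t)) (mvmul (M t) dz)).
Proof.
  intros (H11 & H12 & H21 & H22) (G1 & G2); split; apply derivable_pt_lim_dot; assumption.
Qed.

Definition mnorm (X : mat2) : R := Rabs (m11 X) + Rabs (m12 X) + Rabs (m21 X) + Rabs (m22 X).
Definition vnorm (x : vec2) : R := Rabs (vi x) + Rabs (vv x).

Lemma Rabs_vi_le x : Rabs (vi x) <= vnorm x.
Proof. unfold vnorm; pose proof (Rabs_pos (vv x)); lra. Qed.

Lemma Rabs_vv_le x : Rabs (vv x) <= vnorm x.
Proof. unfold vnorm; pose proof (Rabs_pos (vi x)); lra. Qed.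

Lemma mnorm_nonneg X : 0 <= mnorm X.
Proof. unfold mnorm; pose proof (Rabs_pos (m11 X)); pose proof (Rabs_pos (m12 X));
  pose proof (Rabs_pos (m21 X)); pose proof (Rabs_pos (m22 X)); lra. Qed.

Lemma mnorm_mscale a X : mnorm (mscale a X) = Rabs a * mnorm X.
Proof. unfold mnorm, mscale; cbn; rewrite !Rabs_mult; ring. Qed.

Lemma Rabs_dot_le x1 x2 y1 y2 :
  Rabs (x1 * y1 + x2 * y2) <= Rabs x1 * Rabs y1 + Rabs x2 * Rabs y2.
Proof. rewrite <- !Rabs_mult; apply Rabs_triang. Qed.

Lemma vnorm_mvmul_le X x : vnorm (mvmul X x) <= mnorm X * vnorm x.
Proof.
  destruct X as [a b c d], x as [p q]; unfold vnorm, mnorm, mvmul; cbn.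
  pose proof (Rabs_dot_le a b p q); pose proof (Rabs_dot_le c d p q).
  pose proof (Rabs_pos a); pose proof (Rabs_pos b); pose proof (Rabs_pos c);
  pose proof (Rabs_pos d); pose proof (Rabs_pos p); pose proof (Rabs_pos q).
  nra.
Qed.

Lemma mnorm_mmul_le X Y : mnorm (mmul X Y) <= mnorm X * mnorm Y.
Proof.
  destruct X as [a b c d], Y as [p q r s]; unfold mnorm, mmul; cbn.
  pose proof (Rabs_dot_le a b p r); pose proof (Rabs_dot_le a b q s);
  pose proof (Rabs_dot_le c d p r); pose proof (Rabs_dot_le c d q s).
  pose proof (Rabs_pos a); pose proof (Rabs_pos b); pose proof (Rabs_pos c);
  pose proof (Rabs_pos d); pose proof (Rabs_pos p); pose proof (Rabs_pos q);
  pose proof (Rabs_pos r); pose proof (Rabs_pos s).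
  nra.
Qed.

Lemma mnorm_mpow_le A k : mnorm (mpow A (S k)) <= mnorm A ^ S k.
Proof.
  induction k as [|k IHk].
  - cbn [mpow]; rewrite mmul_mid_r; lra.
  - change (mpow A (S (S k))) with (mmul A (mpow A (S k))).
    eapply Rle_trans; [apply mnorm_mmul_le|].
    change (mnorm A ^ S (S k)) with (mnorm A * mnorm A ^ S k).
    apply Rmult_le_compat_l; [apply mnorm_nonneg | exact IHk].
Qed.

Lemma vcont_vnorm z t : vcont z t -> continuity_pt (fun s => vnorm (z s)) t.
Proof.
  intros [H1 H2]; apply continuity_pt_plus;
    apply (continuity_pt_comp _ Rabs); auto using Rcontinuity_abs.
Qed.

Lemma Rabs_diff_le_of_derive f df a b K : a < b ->
  (forall t, a < t < b -> derivable_pt_lim f t (df t)) ->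
  (forall t, a <= t <= b -> continuity_pt f t) ->
  (forall t, a <= t <= b -> Rabs (df t) <= K) ->
  Rabs (f b - f a) <= K * (b - a).
Proof.
  intros Hab Hder Hcont Hbound.
  destruct (MVT_gen f a b df) as (c & Hc & ->).
  - intros t Ht; rewrite Rmin_left, Rmax_right in Ht by lra; apply is_derive_Reals, Hder, Ht.
  - intros t Ht; rewrite Rmin_left, Rmax_right in Ht by lra; apply Hcont, Ht.
  - rewrite Rmin_left, Rmax_right in Hc by lra.
    rewrite Rabs_mult, (Rabs_right (b - a)) by lra.
    apply Rmult_le_compat_r; [lra | apply Hbound, Hc].
Qed.

Lemma vnorm_diff_le_of_vderiv g dg a b K : a < b ->
  (forall t, a < t < b -> vderiv g t (dg t)) ->
  (forall t, a <= t <= b -> vcont g t) ->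
  (forall t, a <= t <= b -> vnorm (dg t) <= K) ->
  vnorm (vsub (g b) (g a)) <= 2 * K * (b - a).
Proof.
  intros Hab Hder Hcont Hbound.
  assert (Hi : Rabs (vi (g b) - vi (g a)) <= K * (b - a)).
  { apply (Rabs_diff_le_of_derive (fun s => vi (g s)) (fun s => vi (dg s))); auto.
    - intros t Ht; apply Hder, Ht.
    - intros t Ht; apply Hcont, Ht.
    - intros t Ht; eapply Rle_trans; [apply Rabs_vi_le | apply Hbound, Ht]. }
  assert (Hv : Rabs (vv (g b) - vv (g a)) <= K * (b - a)).
  { apply (Rabs_diff_le_of_derive (fun s => vv (g s)) (fun s => vv (dg s))); auto.
    - intros t Ht; apply Hder, Ht.
    - intros t Ht; apply Hcont, Ht.
    - intros t Ht; eapply Rle_trans; [apply Rabs_vv_le | apply Hbound, Ht]. }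
  unfold vnorm, vsub; cbn; lra.
Qed.

Lemma exp_coef_nonneg k s : 0 <= s -> 0 <= exp_coef k s.
Proof.
  intros Hs; unfold exp_coef, Rdiv.
  apply Rmult_le_pos; [apply pow_le, Hs | left; apply Rinv_0_lt_compat, INR_fact_lt_0].
Qed.

Lemma exp_coef_le k s s' : 0 <= s <= s' -> exp_coef k s <= exp_coef k s'.
Proof.
  intros Hs; unfold exp_coef, Rdiv.
  apply Rmult_le_compat_r; [left; apply Rinv_0_lt_compat, INR_fact_lt_0 | apply pow_incr, Hs].
Qed.

Lemma Un_cv_S u l : Un_cv u l -> Un_cv (fun n => u (S n)) l.
Proof.
  intros Hu; apply (Un_cv_ext (fun n => u (n + 1)%nat)); [intro n; now rewrite Nat.add_1_r|].
  now apply CV_shift'.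
Qed.

Lemma exp_coef_tail_cv s K : Un_cv (fun m => exp_coef (S m) s * K ^ S (S m)) 0.
Proof.
  apply (Un_cv_ext (fun m => K * ((s * K) ^ S m / INR (fact (S m))))).
  { intro m; unfold exp_coef; rewrite Rpow_mult_distr; cbn [pow]; unfold Rdiv; ring. }
  rewrite <- (Rmult_0_r K); apply CV_mult; [apply Un_cv_const|].
  apply (Un_cv_S (fun n => (s * K) ^ n / INR (fact n))), cv_speed_pow_fact.
Qed.

(** * Linear flows *)

Lemma eq_of_Un_cv_approx x l u w : Un_cv u l -> Un_cv w 0 ->
  (forall m, Rabs (x - u m) <= w m) -> x = l.
Proof.
  intros Hu Hw Hxu; apply (UL_sequence u); [|exact Hu].
  intros e He; destruct (Hw e He) as [N HN]; exists N; intros n Hn.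
  specialize (HN n Hn); specialize (Hxu n); unfold Rdist in *.
  rewrite Rminus_0_r in HN; rewrite Rabs_minus_sym.
  pose proof (Rle_abs (w n)); lra.
Qed.

Lemma vcont_mvmul M z t dM : mderiv M t dM -> vcont z t ->
  vcont (fun s => mvmul (M s) (z s)) t.
Proof.
  intros (H11 & H12 & H21 & H22) [G1 G2]; split; cbn;
    apply continuity_pt_plus; apply continuity_pt_mult; try assumption;
    eapply derivable_continuous_pt; eexists; eassumption.
Qed.

Lemma mvmul_msub_mmul A P Q x :
  mvmul (msub (mmul Q A) (mmul A P)) x
  = vadd (mvmul (mscale (-1) (mmul A P)) x) (mvmul Q (mvmul A x)).
Proof. mat2_ring. Qed.

Section LinearFlow.

Variables (A : mat2) (a b : R) (z : R -> vec2).
Hypothesis Hab : a < b.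
Hypothesis Hcont : forall t, a <= t <= b -> vcont z t.
Hypothesis Hder : forall t, a < t < b -> vderiv z t (mvmul A (z t)).

(* [s |-> P_m(b - s) z(s)] is constant for the exact flow; for the partial sum [P_m] of the
   exponential series its derivative is the first neglected term of the series. *)
Lemma vderiv_truncated_flow m t : a < t < b ->
  vderiv (fun s => mvmul (exp_partial A (b - s) (S m)) (z s)) t
    (mvmul (mscale (exp_coef (S m) (b - t)) (mpow A (S (S m)))) (z t)).
Proof.
  intros Ht; rewrite <- exp_partial_defect, mvmul_msub_mmul.
  apply vderiv_mvmul; [|apply Hder, Ht].
  apply (mderiv_reflect (fun u => exp_partial A u (S m))), mderiv_exp_partial.
Qed.

Lemma truncated_flow_error B m : (forall t, a <= t <= b -> vnorm (z t) <= B) ->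
  vnorm (vsub (z b) (mvmul (exp_partial A (b - a) (S m)) (z a)))
  <= 2 * (b - a) * B * (exp_coef (S m) (b - a) * mnorm A ^ S (S m)).
Proof.
  intros HB.
  set (K := exp_coef (S m) (b - a) * mnorm A ^ S (S m)).
  assert (HK : 0 <= K).
  { apply Rmult_le_pos; [apply exp_coef_nonneg; lra | apply pow_le, mnorm_nonneg]. }
  assert (Hdz : forall t, a <= t <= b ->
            vnorm (mvmul (mscale (exp_coef (S m) (b - t)) (mpow A (S (S m)))) (z t)) <= K * B).
  { intros t Ht; eapply Rle_trans; [apply vnorm_mvmul_le|].
    rewrite mnorm_mscale, Rabs_right by (apply Rle_ge, exp_coef_nonneg; lra).
    apply Rmult_le_compat; [apply Rmult_le_pos; [apply exp_coef_nonneg; lra | apply mnorm_nonneg]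
                           | unfold vnorm; pose proof (Rabs_pos (vi (z t)));
                             pose proof (Rabs_pos (vv (z t))); lra | | apply HB, Ht].
    apply Rmult_le_compat; [apply exp_coef_nonneg; lra | apply mnorm_nonneg
                           | apply exp_coef_le; lra | apply mnorm_mpow_le]. }
  replace (z b) with (mvmul (exp_partial A (b - b) (S m)) (z b))
    by now rewrite Rminus_diag, exp_partial_t0, mvmul_mid.
  replace (2 * (b - a) * B * K) with (2 * (K * B) * (b - a)) by ring.
  apply (vnorm_diff_le_of_vderiv (fun s => mvmul (exp_partial A (b - s) (S m)) (z s))
           (fun t => mvmul (mscale (exp_coef (S m) (b - t)) (mpow A (S (S m)))) (z t))); auto.
  - apply vderiv_truncated_flow.
  - intros t Ht; eapply vcont_mvmul; [|apply Hcont, Ht].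
    apply (mderiv_reflect (fun u => exp_partial A u (S m))), mderiv_exp_partial.
Qed.

Lemma linear_flow E : is_mexp A (b - a) E -> z b = mvmul E (z a).
Proof.
  intros HE.
  destruct (continuity_ab_maj (fun s => vnorm (z s)) a b) as (tmax & Htmax & _); [lra| |].
  { intros t Ht; apply vcont_vnorm, Hcont, Ht. }
  set (err m := 2 * (b - a) * vnorm (z tmax) * (exp_coef (S m) (b - a) * mnorm A ^ S (S m))).
  assert (Herr : Un_cv err 0).
  { unfold err; rewrite <- (Rmult_0_r (2 * (b - a) * vnorm (z tmax))).
    apply CV_mult; [apply Un_cv_const | apply exp_coef_tail_cv]. }
  assert (Hbound : forall m, vnorm (vsub (z b) (mvmul (exp_partial A (b - a) (S m)) (z a))) <= err m)
    by (intro m; apply truncated_flow_error; exact Htmax).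
  destruct (mcv_mvmul _ _ (z a) HE) as [Hi Hv].
  apply vec2_ext.
  - apply (eq_of_Un_cv_approx _ _ _ err
             (Un_cv_S (fun n => vi (mvmul (exp_partial A (b - a) n) (z a))) _ Hi) Herr).
    intro m; eapply Rle_trans; [|apply Hbound]; exact (Rabs_vi_le (vsub _ _)).
  - apply (eq_of_Un_cv_approx _ _ _ err
             (Un_cv_S (fun n => vv (mvmul (exp_partial A (b - a) n) (z a))) _ Hv) Herr).
    intro m; eapply Rle_trans; [|apply Hbound]; exact (Rabs_vv_le (vsub _ _)).
Qed.

End LinearFlow.

(** * Periodic orbit of the converter *)

Lemma vsub_equilibrium A b c x : vadd (mvmul A c) b = V2 0 0 ->
  vadd (mvmul A x) b = mvmul A (vsub x c).
Proof.
  intros Hc.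
  transitivity (vadd (mvmul A (vsub x c)) (vadd (mvmul A c) b)); [mat2_ring|].
  rewrite Hc; mat2_ring.
Qed.

Lemma affine_periodic_point A b c E1 E2 x0 :
  mdet A <> 0 -> vadd (mvmul A c) b = V2 0 0 -> mmul A E1 = mmul E1 A ->
  mdet (msub mid (mmul E2 E1)) <> 0 ->
  x0 = mvmul (minv (msub mid (mmul E2 E1))) (mvmul E2 (mvmul (minv A) (mvmul (msub E1 mid) b))) ->
  x0 = mvmul E2 (vadd (mvmul E1 (vsub x0 c)) c).
Proof.
  intros HA Hc HAE HN Hx0.
  assert (HAb : mvmul (minv A) b = vsub (V2 0 0) c).
  { assert (Hb : b = mvmul A (vsub (V2 0 0) c)).
    { transitivity (vsub (vadd (mvmul A c) b) (mvmul A c)); [mat2_ring | rewrite Hc; mat2_ring]. }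
    now rewrite Hb, mvmul_minv_l. }
  assert (HAE' : mmul A (msub E1 mid) = mmul (msub E1 mid) A).
  { transitivity (msub (mmul A E1) A); [mat2_ring | rewrite HAE; mat2_ring]. }
  apply (f_equal (mvmul (msub mid (mmul E2 E1)))) in Hx0.
  rewrite mvmul_minv_r, mvmul_minv_comm, HAb in Hx0 by assumption.
  transitivity (vadd (mvmul (msub mid (mmul E2 E1)) x0) (mvmul (mmul E2 E1) x0)); [mat2_ring|].
  rewrite Hx0; mat2_ring.
Qed.

(* With [M := diag(1,-1) E] the fixed-point equation reads [(I + M)((I - M) x0 + M c) = 0],
   and [I - mflip E * E = (I - M)(I + M)]. *)
Lemma half_wave_symmetry E x0 g :
  mdet (msub mid (mmul (mflip E) E)) <> 0 ->
  x0 = mvmul (mflip E) (vadd (mvmul E (vsub x0 (V2 0 g))) (V2 0 g)) ->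
  mvmul E (vsub x0 (V2 0 g)) = vflip x0.
Proof.
  intros HN Hx0.
  set (M := M2 (m11 E) (m12 E) (- m21 E) (- m22 E)).
  assert (HM : mdet (madd mid M) <> 0).
  { intros H0; apply HN.
    replace (msub mid (mmul (mflip E) E)) with (mmul (msub mid M) (madd mid M)) by (unfold M; mat2_ring).
    now rewrite mdet_mmul, H0, Rmult_0_r. }
  assert (Hd : mvmul (madd mid M) (vflip (vsub (vflip x0) (mvmul E (vsub x0 (V2 0 g))))) = V2 0 0).
  { transitivity (vsub x0 (mvmul (mflip E) (vadd (mvmul E (vsub x0 (V2 0 g))) (V2 0 g)))).
    - unfold M; mat2_ring.
    - rewrite <- Hx0; unfold vsub; f_equal; ring. }
  apply mvmul_eq0 in Hd; [|exact HM].
  revert Hd; generalize (mvmul E (vsub x0 (V2 0 g))); intros w Hd.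
  apply (f_equal vi) in Hd as Hi; apply (f_equal vv) in Hd as Hv.
  apply vec2_ext; cbn in *; lra.
Qed.

Lemma continuity_pt_Rmax0 f t : 0 <= t ->
  (forall s, 0 < s -> continuity_pt f s) -> limit1_in f (fun s => 0 < s) (f 0) 0 ->
  continuity_pt (fun s => f (Rmax 0 s)) t.
Proof.
  intros Ht Hcont Hlim; destruct (Rle_lt_or_eq_dec 0 t Ht) as [Hpos | <-].
  - apply (continuity_pt_locally_ext f _ t); [exact Hpos| |apply Hcont, Hpos].
    intros y Hy; unfold Rdist in Hy; apply Rabs_def2 in Hy.
    now rewrite Rmax_right by lra.
  - intros e He; destruct (Hlim e He) as (d & Hd & Hf).
    exists d; split; [exact Hd|]; intros y [_ Hy]; cbn in *; unfold R_dist in *.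
    rewrite (Rmax_left 0 0) by lra.
    destruct (Rlt_or_le 0 y).
    + rewrite Rmax_right by lra; apply Hf; split; assumption.
    + rewrite Rmax_left, Rminus_diag, Rabs_R0 by lra; exact He.
Qed.

Lemma derivable_pt_lim_Rmax0 f t l : 0 < t -> derivable_pt_lim f t l ->
  derivable_pt_lim (fun s => f (Rmax 0 s)) t l.
Proof.
  intros Ht; apply (derivable_pt_lim_locally_ext _ _ t 0 (t + 1)); [lra|].
  intros s Hs; now rewrite Rmax_right by lra.
Qed.

Lemma vderiv_vsub_const z c t dz : vderiv z t dz -> vderiv (fun s => vsub (z s) c) t dz.
Proof.
  intros [H1 H2]; split; cbn.
  - rewrite <- (Rminus_0_r (vi dz)).
    apply (derivable_pt_lim_minus _ (fun _ => vi c)); [exact H1 | apply derivable_pt_lim_const].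
  - rewrite <- (Rminus_0_r (vv dz)).
    apply (derivable_pt_lim_minus _ (fun _ => vv c)); [exact H2 | apply derivable_pt_lim_const].
Qed.

Lemma vcont_vsub_const z c t : vcont z t -> vcont (fun s => vsub (z s) c) t.
Proof.
  intros [H1 H2]; split;
    apply continuity_pt_minus; try assumption; apply continuity_pt_const; now intros ? ?.
Qed.

Lemma affine_flow_from_0 A b c E h z : 0 < h -> vadd (mvmul A c) b = V2 0 0 ->
  is_mexp A h E ->
  (forall t, 0 < t -> vcont z t) ->
  limit1_in (fun s => vi (z s)) (fun s => 0 < s) (vi (z 0)) 0 /\
  limit1_in (fun s => vv (z s)) (fun s => 0 < s) (vv (z 0)) 0 ->
  (forall t, 0 < t < h -> vderiv z t (vadd (mvmul A (z t)) b)) ->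
  vsub (z h) c = mvmul E (vsub (z 0) c).
Proof.
  intros Hh Hc HE Hcont [Hlim1 Hlim2] Hder.
  (* [z] is only right-continuous at 0; extending it by [z 0] to negative times makes it
     continuous on the closed interval, as the mean value theorem requires. *)
  set (y t := z (Rmax 0 t)).
  replace (z h) with (y h) by (unfold y; now rewrite Rmax_right by lra).
  replace (z 0) with (y 0) by (unfold y; now rewrite Rmax_left by lra).
  apply (linear_flow A 0 h (fun t => vsub (y t) c)); [exact Hh | | |].
  - intros t Ht; apply vcont_vsub_const; split;
      [apply (continuity_pt_Rmax0 (fun s => vi (z s))) | apply (continuity_pt_Rmax0 (fun s => vv (z s)))];
      try apply Ht; try assumption; intros s Hs; apply Hcont, Hs.
  - intros t Ht; apply vderiv_vsub_const.
    destruct (Hder t Ht) as [Hi Hv]; rewrite (vsub_equilibrium _ _ _ _ Hc) in Hi, Hv.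
    unfold y; rewrite Rmax_right by lra.
    split; [apply (derivable_pt_lim_Rmax0 (fun s => vi (z s)))
           | apply (derivable_pt_lim_Rmax0 (fun s => vv (z s)))]; (lra || assumption).
  - now rewrite Rminus_0_r.
Qed.

Lemma Am2_mflip Rr L C : Am2 Rr L C = mflip (Am1 Rr L C).
Proof. unfold Am2, Am1, mflip; cbn; f_equal; ring. Qed.

Lemma mdet_Am1 Rr L C : 0 < L -> 0 < C -> mdet (Am1 Rr L C) <> 0.
Proof.
  intros HL HC; unfold mdet, Am1; cbn.
  replace (- (Rr / L) * 0 - - (1 / L) * (1 / C)) with (/ (L * C)) by (field; lra).
  apply Rinv_neq_0_compat, Rmult_integral_contrapositive_currified; lra.
Qed.

Lemma Am1_equilibrium Rr L C Vdc : 0 < L ->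
  vadd (mvmul (Am1 Rr L C) (V2 0 Vdc)) (bv1 L Vdc) = V2 0 0.
Proof. intros HL; unfold Am1, bv1, mvmul, vadd; cbn; f_equal; [field; lra | ring]. Qed.

Theorem proposition1 (Rr L C Vdc T : R)
  (HR : 0 < Rr) (HL : 0 < L) (HC : 0 < C) (HV : 0 < Vdc) (HT : 0 < T)
  (E1 E2 : mat2)
  (hE1 : is_mexp (Am1 Rr L C) (T / 2) E1)
  (hE2 : is_mexp (Am2 Rr L C) (T / 2) E2)
  (hinv : mdet (msub mid (mmul E2 E1)) <> 0)
  (i v : R -> R)
  (hcont : forall t, 0 < t -> continuity_pt i t /\ continuity_pt v t)
  (hcont0 : limit1_in i (fun s => 0 < s) (i 0) 0 /\ limit1_in v (fun s => 0 < s) (v 0) 0)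
  (* x' = A1 x + b1 on [(k-1)T, (k-1)T + T/2], k = 1, 2, ... (here k' = k - 1) *)
  (hode1 : forall (k : nat) (t : R), INR k * T < t < INR k * T + T / 2 ->
     derivable_pt_lim i t (vi (vadd (mvmul (Am1 Rr L C) (V2 (i t) (v t))) (bv1 L Vdc))) /\
     derivable_pt_lim v t (vv (vadd (mvmul (Am1 Rr L C) (V2 (i t) (v t))) (bv1 L Vdc))))
  (* x' = A2 x on [(k-1)T + T/2, kT] *)
  (hode2 : forall (k : nat) (t : R), INR k * T + T / 2 < t < INR (S k) * T ->
     derivable_pt_lim i t (vi (mvmul (Am2 Rr L C) (V2 (i t) (v t)))) /\
     derivable_pt_lim v t (vv (mvmul (Am2 Rr L C) (V2 (i t) (v t)))))
  (hinit : V2 (i 0) (v 0) = xp0 Rr L C Vdc E1 E2) :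
  i 0 = i (T / 2) /\ i (T / 2) = i T.
Proof.
  set (x t := V2 (i t) (v t)); set (c := V2 0 Vdc).
  assert (Hhalf : vsub (x (T / 2)) c = mvmul E1 (vsub (x 0) c)).
  { apply (affine_flow_from_0 (Am1 Rr L C) (bv1 L Vdc));
      [lra | exact (Am1_equilibrium Rr L C Vdc HL) | exact hE1 | exact hcont | exact hcont0 |].
    intros t Ht; apply (hode1 0%nat t); cbn; lra. }
  assert (Hfull : x T = mvmul E2 (x (T / 2))).
  { apply (linear_flow (Am2 Rr L C) (T / 2) T x); [lra | | |].
    - intros t Ht; apply hcont; lra.
    - intros t Ht; apply (hode2 0%nat t); cbn; lra.
    - now replace (T - T / 2) with (T / 2) by field. }
  assert (HE2 : E2 = mflip E1).
  { apply (is_mexp_unique (Am2 Rr L C) (T / 2)); [exact hE2|].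
    rewrite Am2_mflip; now apply is_mexp_mflip. }
  assert (Hperiodic : x 0 = mvmul E2 (vadd (mvmul E1 (vsub (x 0) c)) c)).
  { exact (affine_periodic_point (Am1 Rr L C) (bv1 L Vdc) c E1 E2 (x 0) (mdet_Am1 Rr L C HL HC)
             (Am1_equilibrium Rr L C Vdc HL) (is_mexp_comm _ _ _ hE1) hinv hinit). }
  assert (Hmid : x (T / 2) = vadd (mvmul E1 (vsub (x 0) c)) c).
  { rewrite <- Hhalf; apply vec2_ext; cbn; ring. }
  assert (Hend : x T = x 0) by now rewrite Hfull, Hmid, <- Hperiodic.
  rewrite HE2 in Hperiodic, hinv.
  assert (Hsym := half_wave_symmetry E1 (x 0) Vdc hinv Hperiodic); fold c in Hsym.
  rewrite Hsym in Hmid.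
  apply (f_equal vi) in Hmid; apply (f_equal vi) in Hend; cbn in Hmid, Hend.
  split; lra.
Qed.
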